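(* Let $G$ be a graph with $G = G_1\square G_2$ for graphs $G_1,G_2$. Then $G$ is regular $K_3$-regular if and only if both $G_1$ and $G_2$ are regular $K_3$-regular.
   Context: All graphs are finite, simple and undirected. The $K_3$-degree of a vertex $v$ is the number of triangles containing $v$. A graph is regular $K_3$-regular if all its vertices have the same degree and all its vertices have the same $K_3$-degree. The Cartesian product $G_1\square G_2$ has vertex set $V(G_1)\times V(G_2)$, with $(u,v)$ and $(u',v')$ adjacent iff either $u=u'$ and $vv'\in E(G_2)$, or $v=v'$ and $uu'\in E(G_1)$. *)

From mathcomp Require Import all_boot.
Set Implicit Arguments. Unset Strict Implicit. Unset Printing Implicit Defensive.

Definition simple_graph (T : finType) (e : rel T) : Prop :=
  symmetric e /\ irreflexive e.

Definition deg (T : finType) (e : rel T) (v : T) : nat := #|[set w | e v w]|.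

Definition is_triangle (T : finType) (e : rel T) (S : {set T}) : bool :=
  (#|S| == 3) && [forall x in S, forall y in S, (x != y) ==> e x y].

Definition k3deg (T : finType) (e : rel T) (v : T) : nat :=
  #|[set S : {set T} | is_triangle e S && (v \in S)]|.

Definition reg_K3reg (T : finType) (e : rel T) : Prop :=
  (exists k, forall v, deg e v = k) /\ (exists t, forall v, k3deg e v = t).

Definition cartprod (T1 T2 : finType) (e1 : rel T1) (e2 : rel T2) : rel (T1 * T2) :=
  fun p q => ((p.1 == q.1) && e2 p.2 q.2) || ((p.2 == q.2) && e1 p.1 q.1).

From mathcomp Require Import all_boot.

(* The neighbourhood of (u, v) in G1 □ G2 is the disjoint union
   of a copy of N(u) in the layer G1 × {v} and a copy of N(v) in the layer
   {u} × G2.  A triangle of G1 □ G2 lies in a single layer: if a triangle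
   through (u, v) left both layers, a vertex differing from (u, v) in the
   second coordinate only and one differing in the first coordinate only
   would be non-adjacent.  Hence both the degree and the K3-degree of (u, v)
   are sums of a term depending on u and a term depending on v, and such a
   sum is constant on a product of nonempty sets iff both terms are. *)

Lemma triangle_clique {T : finType} {e : rel T} {S : {set T}} :
  is_triangle e S -> {in S &, forall x y, x != y -> e x y}.
Proof.
case/andP=> _ /forall_inP clique x y xS yS.
by have /forall_inP/(_ y yS)/implyP := clique x xS.
Qed.

Lemma is_triangle_imset {T T' : finType} (e : rel T) (e' : rel T')
    (f : T -> T') (S : {set T}) :
  injective f -> (forall x y, x != y -> e' (f x) (f y) = e x y) ->
  is_triangle e' (f @: S) = is_triangle e S.
Proof.
move=> f_inj f_rel; rewrite /is_triangle card_imset //; congr (_ && _).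
have pairE x y : (f x != f y) ==> e' (f x) (f y) = (x != y) ==> e x y.
  by rewrite (inj_eq f_inj); case: eqP => //= /eqP /f_rel.
apply/forall_inP/forall_inP => [clique x xS | clique _ /imsetP [x xS ->]].
  apply/forall_inP => y yS; rewrite -pairE.
  by have /forall_inP := clique _ (imset_f f xS); apply; apply: imset_f.
apply/forall_inP => _ /imsetP [y yS ->]; rewrite pairE.
by have /forall_inP := clique x xS; apply.
Qed.

Section Layers.

Context {T1 T2 : finType}.
Implicit Types (u : T1) (v : T2) (A : {set T1}) (B : {set T2}).

Definition layer1 (v : T2) (A : {set T1}) : {set T1 * T2} := [set (a, v) | a in A].
Definition layer2 (u : T1) (B : {set T2}) : {set T1 * T2} := [set (u, b) | b in B].

Lemma mem_layer1 v A a b : ((a, b) \in layer1 v A) = (b == v) && (a \in A).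
Proof.
apply/imsetP/andP => [[a' a'A [-> ->]] | [/eqP -> aA]]; first by rewrite eqxx.
by exists a.
Qed.

Lemma mem_layer2 u B a b : ((a, b) \in layer2 u B) = (a == u) && (b \in B).
Proof.
apply/imsetP/andP => [[b' b'B [-> ->]] | [/eqP -> bB]]; first by rewrite eqxx.
by exists b.
Qed.

Lemma layer1_inj v : injective (layer1 v).
Proof. by apply: imset_inj => x y []. Qed.

Lemma layer2_inj u : injective (layer2 u).
Proof. by apply: imset_inj => x y []. Qed.

Lemma card_layer1 v A : #|layer1 v A| = #|A|.
Proof. by rewrite card_imset // => x y []. Qed.

Lemma card_layer2 u B : #|layer2 u B| = #|B|.
Proof. by rewrite card_imset // => x y []. Qed.

Lemma layer1I2 u v A B : layer1 v A :&: layer2 u B \subset [set (u, v)].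
Proof.
apply/subsetP => -[a b]; rewrite !inE mem_layer1 mem_layer2.
by case/andP=> /andP [/eqP -> _] /andP [/eqP -> _].
Qed.

Lemma card_layer1U2 u v A B :
  u \notin A -> #|layer1 v A :|: layer2 u B| = #|A| + #|B|.
Proof.
move=> uA; rewrite cardsU card_layer1 card_layer2.
suff -> : layer1 v A :&: layer2 u B = set0 by rewrite cards0 subn0.
apply/setP => -[a b]; rewrite in_set0; apply/negP => ab_meet.
have /subsetP/(_ _ ab_meet) := layer1I2 u v A B; rewrite inE => /eqP [ea eb].
by move: ab_meet; rewrite inE mem_layer1 ea (negbTE uA) andbF.
Qed.

Lemma layer1_eq_layer2 u v A B : layer1 v A = layer2 u B -> #|A| <= 1.
Proof.
move=> eqAB; rewrite -(card_layer1 v) -(cards1 (u, v)); apply: subset_leq_card.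
by rewrite -[layer1 v A]setIid {2}eqAB layer1I2.
Qed.

Lemma layer1_snd {S : {set T1 * T2}} {v : T2} :
  {in S, forall x, x.2 == v} -> S = layer1 v [set x.1 | x in S].
Proof.
move=> sndS; apply/setP => -[a b]; rewrite mem_layer1; apply/idP/andP.
  by move=> abS; split; [exact: sndS abS | apply/imsetP; exists (a, b)].
by case=> /eqP -> /imsetP [[a' b'] abS /= ->]; rewrite -(eqP (sndS _ abS)).
Qed.

Lemma layer2_fst {S : {set T1 * T2}} {u : T1} :
  {in S, forall x, x.1 == u} -> S = layer2 u [set x.2 | x in S].
Proof.
move=> fstS; apply/setP => -[a b]; rewrite mem_layer2; apply/idP/andP.
  by move=> abS; split; [exact: fstS abS | apply/imsetP; exists (a, b)].
by case=> /eqP -> /imsetP [[a' b'] abS /= ->]; rewrite -(eqP (fstS _ abS)).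
Qed.

End Layers.

Section CartesianProduct.

Context {T1 T2 : finType} (e1 : rel T1) (e2 : rel T2).
Local Notation e := (cartprod e1 e2).

Lemma cartprod_nbhs u v :
  [set w | e (u, v) w] = layer1 v [set a | e1 u a] :|: layer2 u [set b | e2 v b].
Proof.
apply/setP => -[a b]; rewrite !inE mem_layer1 mem_layer2 !inE /cartprod /=.
by rewrite orbC (eq_sym a) (eq_sym b).
Qed.

Lemma deg_cartprod :
  irreflexive e1 -> forall u v, deg e (u, v) = deg e1 u + deg e2 v.
Proof. by move=> irr1 u v; rewrite /deg cartprod_nbhs card_layer1U2 // inE irr1. Qed.

Lemma is_triangle_layer1 v A : is_triangle e (layer1 v A) = is_triangle e1 A.
Proof.
apply: is_triangle_imset => [x y [] // | x y neq_xy].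
by rewrite /cartprod /= (negbTE neq_xy) eqxx.
Qed.

Lemma is_triangle_layer2 u B : is_triangle e (layer2 u B) = is_triangle e2 B.
Proof.
apply: is_triangle_imset => [x y [] // | x y neq_xy].
by rewrite /cartprod /= (negbTE neq_xy) eqxx orbF.
Qed.

Lemma cartprod_clique_flat {S : {set T1 * T2}} {u : T1} {v : T2} :
  {in S &, forall x y, x != y -> e x y} -> (u, v) \in S ->
  {in S, forall x, x.2 == v} \/ {in S, forall x, x.1 == u}.
Proof.
move=> clique uvS; have [|] := boolP [forall x in S, x.2 == v].
  by move/forall_inP; left.
case/forall_inPn => -[x1 x2] xS /= neq_x2; right => -[y1 y2] yS /=.
apply/negPn/negP => neq_y1.
have /(clique _ _ uvS xS) : (u, v) != (x1, x2) by apply: contraNneq neq_x2 => -[_ <-].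
rewrite /cartprod /= (eq_sym v) (negbTE neq_x2) orbF => /andP [/eqP eq_x1 _].
have /(clique _ _ uvS yS) : (u, v) != (y1, y2) by apply: contraNneq neq_y1 => -[<-].
rewrite /cartprod /= (eq_sym u) (negbTE neq_y1) => /andP [/eqP eq_y2 _].
subst x1 y2.
have /(clique _ _ xS yS) : (u, x2) != (y1, v) by apply: contraNneq neq_x2 => -[_ ->].
by rewrite /cartprod /= (eq_sym u) (negbTE neq_x2) (negbTE neq_y1).
Qed.

Lemma cartprod_triangles_through u v :
  [set S | is_triangle e S && ((u, v) \in S)] =
  layer1 v @: [set A | is_triangle e1 A && (u \in A)] :|:
  layer2 u @: [set B | is_triangle e2 B && (v \in B)].
Proof.
apply/setP => S; rewrite !inE; apply/andP/orP => [[triS uvS] | ].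
  have [sndS | fstS] := cartprod_clique_flat (triangle_clique triS) uvS.
    left; apply/imsetP; exists [set x.1 | x in S]; last exact: layer1_snd sndS.
    by rewrite inE -(is_triangle_layer1 v) -(layer1_snd sndS) triS (imset_f fst uvS).
  right; apply/imsetP; exists [set x.2 | x in S]; last exact: layer2_fst fstS.
  by rewrite inE -(is_triangle_layer2 u) -(layer2_fst fstS) triS (imset_f snd uvS).
case=> /imsetP [A]; rewrite inE => /andP [triA uA] ->.
  by rewrite is_triangle_layer1 mem_layer1 eqxx.
by rewrite is_triangle_layer2 mem_layer2 eqxx.
Qed.

Lemma k3deg_cartprod u v : k3deg e (u, v) = k3deg e1 u + k3deg e2 v.
Proof.
rewrite /k3deg cartprod_triangles_through cardsU.
rewrite (card_imset _ (layer1_inj v)) (card_imset _ (layer2_inj u)).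
suff -> : layer1 v @: [set A | is_triangle e1 A && (u \in A)] :&:
          layer2 u @: [set B | is_triangle e2 B && (v \in B)] = set0.
  by rewrite cards0 subn0.
apply/setP => S; rewrite in_set0 inE; apply/negP.
case/andP => /imsetP [A]; rewrite inE => /andP [/andP [/eqP cardA _] _] ->.
by case/imsetP => B _ /layer1_eq_layer2; rewrite cardA.
Qed.

End CartesianProduct.

Lemma constant_additive {A B : Type} (a0 : A) (b0 : B)
    {f : A * B -> nat} {g : A -> nat} {h : B -> nat} :
  (forall a b, f (a, b) = g a + h b) ->
  (exists k, forall x, f x = k) <->
  (exists k, forall a, g a = k) /\ (exists k, forall b, h b = k).
Proof.
move=> f_sum; split => [[k fk] | [[k1 gk1] [k2 hk2]]].
  split; [exists (k - h b0) => a | exists (k - g a0) => b].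
    by rewrite -(fk (a, b0)) f_sum addnK.
  by rewrite -(fk (a0, b)) f_sum addKn.
by exists (k1 + k2) => -[a b]; rewrite f_sum gk1 hk2.
Qed.

Theorem theorem4p2 (T1 T2 : finType) (e1 : rel T1) (e2 : rel T2)
  (hT1 : 0 < #|T1|) (hT2 : 0 < #|T2|)
  (g1 : simple_graph e1) (g2 : simple_graph e2) :
  reg_K3reg (cartprod e1 e2) <-> reg_K3reg e1 /\ reg_K3reg e2.
Proof.
have [u0 _] := card_gt0P hT1; have [v0 _] := card_gt0P hT2.
have regular := constant_additive u0 v0 (deg_cartprod e1 e2 g1.2).
have K3regular := constant_additive u0 v0 (k3deg_cartprod e1 e2).
rewrite /reg_K3reg; tauto.
Qed.
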